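(* Let $p$ be a prime and $G=S^1\times C_p$. There exists a continuous $G$-equivariant map $f_3:S(V_3)\to S(W_3)$, where $V_3=V_{1,1}\oplus V_{p,1}\oplus V_{p^2,1}$ and $W_3=V_{p^3,0}\oplus V_{0,1}$.
   Context: $S^1=\{t\in\mathbb{C}:|t|=1\}$, $C_p$ is cyclic of prime order $p$ with generator $a$, and elements of $G$ are written $ta^i$. Let $\xi_p=\exp(2\pi\sqrt{-1}/p)$. For $k\in\mathbb{Z}$ and $l\in\mathbb{Z}/p$, $V_{k,l}$ is the one-dimensional complex $G$-representation on $\mathbb{C}$ with $t\cdot z=t^kz$, $a\cdot z=\xi_p^lz$. $S(V)$ denotes the unit sphere of $V$. *)

From Stdlib Require Import Reals.
From Coquelicot Require Import Coquelicot.
Open Scope R_scope.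

Notation CC := Complex.C.

Definition xi (p : nat) : CC := (cos (2 * PI / INR p), sin (2 * PI / INR p)).

Definition in_S1 (t : CC) : Prop := Cmod t = 1.

(* The one-dimensional representation V_{k,l}: action of t a^i on z is
   t^k * xi_p^(l*i) * z. Here k >= 0 is all that is needed. *)
Definition actV (p k l : nat) (t : CC) (i : nat) (z : CC) : CC :=
  Cmult (Cmult (pow_n t k) (pow_n (xi p) (l * i))) z.

Definition V3 := (CC * CC * CC)%type.
Definition W3 := (CC * CC)%type.

Definition actV3 (p : nat) (t : CC) (i : nat) (v : V3) : V3 :=
  let '(z1, z2, z3) := v in
  (actV p 1 1 t i z1, actV p p 1 t i z2, actV p (p ^ 2) 1 t i z3).

Definition actW3 (p : nat) (t : CC) (i : nat) (w : W3) : W3 :=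
  let '(w1, w2) := w in (actV p (p ^ 3) 0 t i w1, actV p 0 1 t i w2).

Definition SV3 (v : V3) : Prop :=
  let '(z1, z2, z3) := v in Cmod z1 ^ 2 + Cmod z2 ^ 2 + Cmod z3 ^ 2 = 1.
Definition SW3 (w : W3) : Prop :=
  let '(w1, w2) := w in Cmod w1 ^ 2 + Cmod w2 ^ 2 = 1.

(* Write u_i = z_i / |z_i| and r_i = |z_i|^2.  A "phase monomial"
   u1^k1 u2^k2 u3^k3 (negative exponents meaning conjugates) is multiplied by
   t^(k1 + p k2 + p^2 k3) xi^(i (k1 + k2 + k3)) under the action of t a^i.  The monomials
   u1^(p^3), u2^(p^2), u3^p and u1^(p^2) u2^(-p) u3^p therefore transform like
   the first coordinate of W_3, and u2 u1^(-p), u3 u1^(-p^2), u3 u2^(-p) like the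
   second one.  Let W1 (resp. W2) be the combination of the first (resp. second)
   family whose coefficients are bump functions of open regions of the simplex
   r1 + r2 + r3 = 1; the invariance of the r_i makes (W1, W2) equivariant, and
   f_3 is its radial projection onto S(W_3).  The regions are chosen so that at
   each point of the simplex one of W1, W2 has a single nonzero term, or each has
   exactly two and the ratio of the two terms of W1 is a power of the ratio of
   the two terms of W2; the latter is real when W2 = 0, and the factor i put on
   the fourth monomial of W1 then keeps W1 away from 0. *)

From Stdlib Require Import Reals Arith Lia Lra ZArith Znumtheory.
From Coquelicot Require Import Coquelicot.
From Stdlib Require Import List.
Import ListNotations.
Open Scope R_scope.

(* [Cconj u] stands for [u^-1], so the group laws hold on the unit circle. *)
Definition Cpowz (u : CC) (k : Z) : CC :=
  match k with
  | Z0 => 1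
  | Zpos n => Cpow u (Pos.to_nat n)
  | Zneg n => Cpow (Cconj u) (Pos.to_nat n)
  end.

Lemma Z_nat_or_opp_nat (k : Z) : exists n : nat, k = Z.of_nat n \/ k = (- Z.of_nat n)%Z.
Proof. exists (Z.abs_nat k). lia. Qed.

Lemma Cconj_1 : Cconj 1 = 1.
Proof. unfold Cconj; simpl; now rewrite Ropp_0. Qed.

Lemma Cpowz_of_nat (u : CC) (n : nat) : Cpowz u (Z.of_nat n) = Cpow u n.
Proof. destruct n as [|n]; [reflexivity|]. simpl. now rewrite SuccNat2Pos.id_succ. Qed.

Lemma Cpowz_opp (u : CC) (k : Z) : Cpowz u (- k) = Cconj (Cpowz u k).
Proof.
  destruct k as [|n|n]; simpl.
  - now rewrite Cconj_1.
  - now rewrite Cpow_conj.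
  - now rewrite Cpow_conj, Cconj_conj.
Qed.

Lemma Cpowz_opp_nat (u : CC) (n : nat) : Cpowz u (- Z.of_nat n) = Cpow (Cconj u) n.
Proof. now rewrite Cpowz_opp, Cpowz_of_nat, Cpow_conj. Qed.

Lemma Cpowz_mult_l (u v : CC) (k : Z) : Cpowz (u * v) k = (Cpowz u k * Cpowz v k)%C.
Proof.
  destruct k as [|n|n]; simpl.
  - now rewrite Cmult_1_l.
  - apply Cpow_mult_l.
  - rewrite Cmult_conj. apply Cpow_mult_l.
Qed.

Lemma Cpowz_1_l (k : Z) : Cpowz 1 k = 1.
Proof. destruct k; simpl; rewrite ?Cconj_1; now rewrite ?Cpow_1_l. Qed.

Lemma Cpowz_Cpow (u : CC) (n : nat) (k : Z) :
  Cpowz (Cpow u n) k = Cpowz u (Z.of_nat n * k).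
Proof.
  destruct (Z_nat_or_opp_nat k) as [m [-> | ->]].
  - now rewrite <- Nat2Z.inj_mul, !Cpowz_of_nat, Cpow_mult_r.
  - rewrite Z.mul_opp_r, <- Nat2Z.inj_mul, !Cpowz_opp_nat.
    now rewrite Cpow_mult_r, Cpow_conj.
Qed.

Lemma Cpow_Cpowz (u : CC) (k : Z) (n : nat) :
  Cpow (Cpowz u k) n = Cpowz u (Z.of_nat n * k).
Proof.
  destruct (Z_nat_or_opp_nat k) as [m [-> | ->]].
  - now rewrite <- Nat2Z.inj_mul, !Cpowz_of_nat, <- Cpow_mult_r, Nat.mul_comm.
  - rewrite Z.mul_opp_r, <- Nat2Z.inj_mul, !Cpowz_opp_nat.
    now rewrite <- Cpow_mult_r, Nat.mul_comm.
Qed.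

Lemma Cpowz_root_of_unity (X : CC) (p : nat) (m : Z) :
  Cpow X p = 1 -> Cpowz X (Z.of_nat p * m) = 1.
Proof. intros HX. now rewrite <- Cpowz_Cpow, HX, Cpowz_1_l. Qed.

Lemma unit_mult_conj (u : CC) : Cmod u = 1 -> (u * Cconj u)%C = 1.
Proof. intros Hu. now rewrite <- Cmod2_conj, Hu, pow1. Qed.

Lemma Cpowz_sub_nat (u : CC) (a b : nat) : Cmod u = 1 ->
  Cpowz u (Z.of_nat a - Z.of_nat b) = (Cpow u a * Cpow (Cconj u) b)%C.
Proof.
  intros Hu. revert a. induction b as [|b IH]; intros a.
  - now rewrite Z.sub_0_r, Cpowz_of_nat, Cmult_1_r.
  - destruct a as [|a].
    + now rewrite Z.sub_0_l, Cpowz_opp_nat, Cmult_1_l.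
    + replace (Z.of_nat (S a) - Z.of_nat (S b))%Z with (Z.of_nat a - Z.of_nat b)%Z by lia.
      rewrite IH, !Cpow_S.
      transitivity (Cpow u a * Cpow (Cconj u) b * (u * Cconj u))%C.
      * now rewrite unit_mult_conj, Cmult_1_r.
      * ring.
Qed.

Lemma Cpowz_add (u : CC) (k l : Z) : Cmod u = 1 ->
  Cpowz u (k + l) = (Cpowz u k * Cpowz u l)%C.
Proof.
  intros Hu.
  replace k with (Z.of_nat (Z.to_nat k) - Z.of_nat (Z.to_nat (- k)))%Z by lia.
  replace l with (Z.of_nat (Z.to_nat l) - Z.of_nat (Z.to_nat (- l)))%Z by lia.
  set (a := Z.to_nat k); set (b := Z.to_nat (- k)).
  set (c := Z.to_nat l); set (d := Z.to_nat (- l)).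
  replace (Z.of_nat a - Z.of_nat b + (Z.of_nat c - Z.of_nat d))%Z
    with (Z.of_nat (a + c) - Z.of_nat (b + d))%Z by lia.
  rewrite !Cpowz_sub_nat, !Cpow_add_r by exact Hu.
  ring.
Qed.

Lemma Cmod_Cpowz (u : CC) (k : Z) : Cmod u = 1 -> Cmod (Cpowz u k) = 1.
Proof.
  intros Hu. destruct k as [|n|n]; simpl; rewrite ?Cmod_1, ?Cmod_pow, ?Cmod_conj, ?Hu;
  now rewrite ?pow1.
Qed.

Lemma Cmod_Cpowz_le_1 (u : CC) (k : Z) : Cmod u <= 1 -> Cmod (Cpowz u k) <= 1.
Proof.
  intros Hu. destruct k as [|n|n]; simpl; rewrite ?Cmod_1, ?Cmod_pow, ?Cmod_conj; [lra| |];
  rewrite <- (pow1 (Pos.to_nat n)); apply pow_incr; split; auto using Cmod_ge_0.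
Qed.

(* [Csgn 0 = 0], since [/ 0 = 0]. *)
Definition Csgn (z : CC) : CC := (RtoC (/ Cmod z) * z)%C.

Definition Cmod2 (z : CC) : R := Cmod z ^ 2.

Lemma Cmod_Csgn (z : CC) : z <> 0%C -> Cmod (Csgn z) = 1.
Proof.
  intros Hz. apply Cmod_gt_0 in Hz.
  unfold Csgn. rewrite Cmod_mult, Cmod_R, Rabs_pos_eq.
  - now field; apply Rgt_not_eq.
  - now apply Rlt_le, Rinv_0_lt_compat.
Qed.

Lemma Cmod_Csgn_le_1 (z : CC) : Cmod (Csgn z) <= 1.
Proof.
  destruct (Ceq_dec z 0) as [-> | Hz].
  - unfold Csgn. rewrite Cmult_0_r, Cmod_0. lra.
  - rewrite Cmod_Csgn by exact Hz. lra.
Qed.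

Lemma Cmod_unit_mult (c z : CC) : Cmod c = 1 -> Cmod (c * z) = Cmod z.
Proof. intros Hc. now rewrite Cmod_mult, Hc, Rmult_1_l. Qed.

Lemma Csgn_unit_mult (c z : CC) : Cmod c = 1 -> Csgn (c * z) = (c * Csgn z)%C.
Proof. intros Hc. unfold Csgn. rewrite Cmod_unit_mult by exact Hc. ring. Qed.

Section Continuity.
Context {T : UniformSpace}.
Implicit Types (x : T) (f g : T -> CC) (h : T -> R).

Lemma continuous_pair {U V : UniformSpace} (f : T -> U) (g : T -> V) x :
  continuous f x -> continuous g x ->
  continuous (fun y => (f y, g y) : prod_UniformSpace U V) x.
Proof.
  intros Hf Hg. apply filterlim_locally. intros eps.
  apply (filter_and _ _ (proj1 (filterlim_locally _ _) Hf eps)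
                        (proj1 (filterlim_locally _ _) Hg eps)).
Qed.

Lemma continuous_Cmult f g x :
  continuous f x -> continuous g x -> continuous (fun y => (f y * g y)%C) x.
Proof.
  intros Hf Hg P HP. apply locally_C in HP.
  apply (continuous_mult (K := C_AbsRing) f g x); [| |exact HP];
    intros Q HQ; [apply Hf | apply Hg]; now apply locally_C.
Qed.

Lemma continuous_Cplus f g x :
  continuous f x -> continuous g x -> continuous (fun y => (f y + g y)%C) x.
Proof. apply (continuous_plus (V := C_NormedModule)). Qed.

Lemma continuous_Cmod f x : continuous f x -> continuous (fun y => Cmod (f y)) x.
Proof.
  intros Hf. apply (continuous_comp (V := AbsRing_UniformSpace C_AbsRing) f Cmod).
  - intros P HP. apply Hf. now apply locally_C.
  - apply (continuous_abs (K := C_AbsRing)).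
Qed.

Lemma continuous_Cmod2 f x : continuous f x -> continuous (fun y => Cmod2 (f y)) x.
Proof.
  intros Hf. unfold Cmod2. simpl.
  apply (continuous_mult (K := R_AbsRing)); [now apply continuous_Cmod|].
  apply (continuous_mult (K := R_AbsRing)); [now apply continuous_Cmod | apply continuous_const].
Qed.

Lemma continuous_Cconj f x : continuous f x -> continuous (fun y => Cconj (f y)) x.
Proof.
  intros Hf. apply (continuous_pair (fun y => fst (f y)) (fun y => - snd (f y))).
  - apply (continuous_comp f fst); [exact Hf|]. destruct (f x); apply continuous_fst.
  - apply (continuous_opp (V := R_NormedModule)), (continuous_comp f snd); [exact Hf|].
    destruct (f x); apply continuous_snd.
Qed.

Lemma continuous_RtoC h x : continuous h x -> continuous (fun y => RtoC (h y)) x.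
Proof. intros Hh. apply (continuous_pair h (fun _ => 0)); [exact Hh | apply continuous_const]. Qed.

Lemma continuous_Cpowz f x (k : Z) : continuous f x -> continuous (fun y => Cpowz (f y) k) x.
Proof.
  intros Hf.
  assert (Hpow : forall g, continuous g x -> forall n, continuous (fun y => Cpow (g y) n) x).
  { intros g Hg n. induction n as [|n IH]; [apply continuous_const|].
    now apply continuous_Cmult. }
  destruct k; [apply continuous_const | now apply Hpow | now apply Hpow, continuous_Cconj].
Qed.

Lemma continuous_Csgn f x : continuous f x -> f x <> 0%C -> continuous (fun y => Csgn (f y)) x.
Proof.
  intros Hf Hfx. apply continuous_Cmult; [|exact Hf].
  apply continuous_RtoC, (continuous_comp (fun y => Cmod (f y)) Rinv).
  - now apply continuous_Cmod.
  - apply continuous_Rinv. intros H. now apply Hfx, Cmod_eq_0.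
Qed.

Lemma continuous_sub_const (h : T -> R) (c : R) (x : T) :
  continuous h x -> continuous (fun y => h y - c) x.
Proof.
  intros Hh. apply (continuous_minus (V := R_NormedModule)); [exact Hh | apply continuous_const].
Qed.

Lemma continuous_add_const_sub (h g : T -> R) (c : R) (x : T) :
  continuous h x -> continuous g x -> continuous (fun y => h y + c - g y) x.
Proof.
  intros Hh Hg. apply (continuous_minus (V := R_NormedModule)); [|exact Hg].
  apply (continuous_plus (V := R_NormedModule)); [exact Hh | apply continuous_const].
Qed.

Lemma continuous_scale_bounded h f x :
  continuous h x -> (h x <> 0 -> continuous f x) -> (forall y, Cmod (f y) <= 1) ->
  continuous (fun y => (RtoC (h y) * f y)%C) x.
Proof.
  intros Hh Hf Hbound. destruct (Req_dec (h x) 0) as [Hx0 | Hx0].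
  - apply filterlim_locally. intros eps.
    generalize (proj1 (filterlim_locally _ _) Hh eps). apply filter_imp.
    intros y Hy. apply C_NormedModule_mixin_compat1.
    replace (minus (RtoC (h y) * f y)%C (RtoC (h x) * f x)%C) with (RtoC (h y) * f y)%C.
    + rewrite Cmod_mult, Cmod_R.
      apply (Rle_lt_trans _ (Rabs (h y) * 1)).
      * apply Rmult_le_compat_l; [apply Rabs_pos | apply Hbound].
      * rewrite Hx0 in Hy. change (Rabs (h y - 0) < eps) in Hy.
        now rewrite Rmult_1_r, <- (Rminus_0_r (h y)).
    + rewrite Hx0. unfold minus, plus, opp; simpl. ring.
  - apply continuous_Cmult; [now apply continuous_RtoC | now apply Hf].
Qed.
End Continuity.

Definition normW3 (w : W3) : R := sqrt (Cmod2 (fst w) + Cmod2 (snd w)).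

Definition radial (w : W3) : W3 :=
  ((RtoC (/ normW3 w) * fst w)%C, (RtoC (/ normW3 w) * snd w)%C).

Lemma normW3_pos (w : W3) : w <> (RtoC 0, RtoC 0) -> 0 < normW3 w.
Proof.
  destruct w as [w1 w2]. intros Hw. apply sqrt_lt_R0. unfold Cmod2; simpl.
  assert (H1 := pow2_ge_0 (Cmod w1)). assert (H2 := pow2_ge_0 (Cmod w2)).
  destruct (Ceq_dec w1 0) as [-> | Hw1].
  - assert (Hw2 : w2 <> 0%C) by (intros ->; now apply Hw).
    apply Cmod_gt_0 in Hw2. assert (0 < Cmod w2 ^ 2) by now apply pow_lt. lra.
  - apply Cmod_gt_0 in Hw1. assert (0 < Cmod w1 ^ 2) by now apply pow_lt. lra.
Qed.

Lemma SW3_radial (w : W3) : w <> (RtoC 0, RtoC 0) -> SW3 (radial w).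
Proof.
  intros Hw. assert (Hn := normW3_pos w Hw).
  assert (Hn2 : normW3 w ^ 2 = Cmod (fst w) ^ 2 + Cmod (snd w) ^ 2).
  { unfold normW3, Cmod2. rewrite pow2_sqrt; [reflexivity|].
    assert (H1 := pow2_ge_0 (Cmod (fst w))). assert (H2 := pow2_ge_0 (Cmod (snd w))). lra. }
  unfold SW3, radial; simpl. rewrite !Cmod_mult, Cmod_R, Rabs_pos_eq.
  2: now apply Rlt_le, Rinv_0_lt_compat.
  field_simplify; [|lra]. rewrite <- Hn2. field. lra.
Qed.

Lemma radial_unit_mult (c1 c2 w1 w2 : CC) : Cmod c1 = 1 -> Cmod c2 = 1 ->
  radial ((c1 * w1)%C, (c2 * w2)%C)
  = ((c1 * fst (radial (w1, w2)))%C, (c2 * snd (radial (w1, w2)))%C).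
Proof.
  intros H1 H2. unfold radial, normW3, Cmod2; simpl.
  rewrite !Cmod_unit_mult by assumption. f_equal; ring.
Qed.

Lemma continuous_radial (w : W3) : w <> (RtoC 0, RtoC 0) -> continuous radial w.
Proof.
  intros Hw. destruct w as [w1 w2].
  assert (Hfst : continuous (fun w' : W3 => fst w') (w1, w2)) by apply continuous_fst.
  assert (Hsnd : continuous (fun w' : W3 => snd w') (w1, w2)) by apply continuous_snd.
  assert (Hinv : continuous (fun w' : W3 => RtoC (/ normW3 w')) (w1, w2)).
  { apply continuous_RtoC, (continuous_comp normW3 Rinv).
    - apply (continuous_comp (fun w' : W3 => Cmod2 (fst w') + Cmod2 (snd w')) sqrt);
        [|apply continuous_sqrt].
      apply (continuous_plus (V := R_NormedModule)); now apply continuous_Cmod2.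
    - apply continuous_Rinv, Rgt_not_eq, normW3_pos, Hw. }
  apply continuous_pair; now apply continuous_Cmult.
Qed.

Fixpoint bump (l : list R) : R :=
  match l with
  | [] => 1
  | x :: l => Rmax x 0 * bump l
  end.

Lemma bump_pos (l : list R) : Forall (Rlt 0) l -> 0 < bump l.
Proof.
  induction 1 as [|x l Hx _ IH]; simpl; [lra|].
  rewrite Rmax_left by lra. now apply Rmult_lt_0_compat.
Qed.

Lemma bump_neq_0 (l : list R) : bump l <> 0 -> Forall (Rlt 0) l.
Proof.
  induction l as [|x l IH]; simpl; intros Hb; constructor.
  - destruct (Rlt_dec 0 x) as [Hx | Hx]; [exact Hx|].
    rewrite Rmax_right in Hb by lra. lra.
  - apply IH. intros H. apply Hb. rewrite H. ring.
Qed.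

Lemma bump_eq_0 (l : list R) : ~ Forall (Rlt 0) l -> bump l = 0.
Proof.
  intros Hl. destruct (Req_dec (bump l) 0) as [H | H]; [exact H|].
  now apply bump_neq_0 in H.
Qed.

Lemma Rmax_0_Rabs (r : R) : Rmax r 0 = (r + Rabs r) / 2.
Proof.
  unfold Rmax. destruct (Rle_dec r 0).
  - rewrite Rabs_left1 by lra. field.
  - rewrite Rabs_pos_eq by lra. field.
Qed.

Lemma continuous_bump_cons {T : UniformSpace} (h : T -> R) (l : T -> list R) (x : T) :
  continuous h x -> continuous (fun y => bump (l y)) x ->
  continuous (fun y => bump (h y :: l y)) x.
Proof.
  intros Hh Hl. apply (continuous_mult (K := R_AbsRing)); [|exact Hl].
  apply (continuous_comp h (fun r => Rmax r 0)); [exact Hh|].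
  apply continuous_ext with (f := fun r => (r + Rabs r) / 2).
  - intros r. symmetry. apply Rmax_0_Rabs.
  - apply (continuous_mult (K := R_AbsRing)); [|apply continuous_const].
    apply (continuous_plus (V := R_NormedModule)); [apply continuous_id | apply continuous_Rabs].
Qed.

(* The constants matter only through [simplex_cover]. *)
Definition dominant (ri rj rk : R) : list R := [ri - 7/20; ri + 1/50 - rj; ri + 1/50 - rk].
Definition paired (ri rj rk : R) : list R :=
  [ri - 1/10; rj - 1/10; ri + 1/50 - rk; rj + 1/50 - rk].
Definition central (r1 r2 r3 : R) : list R := [r1 - 1/4; r2 - 1/4; r3 - 1/4].

Lemma dominant_pos (ri rj rk : R) : Forall (Rlt 0) (dominant ri rj rk) -> 0 < ri.
Proof. intros H. unfold dominant in H. rewrite !Forall_cons_iff in H. lra. Qed.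

Lemma paired_pos (ri rj rk : R) : Forall (Rlt 0) (paired ri rj rk) -> 0 < ri /\ 0 < rj.
Proof. intros H. unfold paired in H. rewrite !Forall_cons_iff in H. lra. Qed.

Lemma central_pos (r1 r2 r3 : R) : Forall (Rlt 0) (central r1 r2 r3) -> 0 < r1 /\ 0 < r2 /\ 0 < r3.
Proof. intros H. unfold central in H. rewrite !Forall_cons_iff in H. lra. Qed.

Lemma Cmod2_pos_neq_0 (z : CC) : 0 < Cmod2 z -> z <> 0%C.
Proof. unfold Cmod2. intros Hz ->. rewrite Cmod_0 in Hz. simpl in Hz. lra. Qed.

Lemma dominant_neq_0 (zi : CC) (rj rk : R) :
  Forall (Rlt 0) (dominant (Cmod2 zi) rj rk) -> zi <> 0%C.
Proof. intros H. now apply dominant_pos, Cmod2_pos_neq_0 in H. Qed.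

Lemma paired_neq_0 (zi zj : CC) (rk : R) :
  Forall (Rlt 0) (paired (Cmod2 zi) (Cmod2 zj) rk) -> zi <> 0%C /\ zj <> 0%C.
Proof. intros H. apply paired_pos in H. split; apply Cmod2_pos_neq_0; tauto. Qed.

Lemma central_neq_0 (z1 z2 z3 : CC) :
  Forall (Rlt 0) (central (Cmod2 z1) (Cmod2 z2) (Cmod2 z3)) ->
  z1 <> 0%C /\ z2 <> 0%C /\ z3 <> 0%C.
Proof. intros H. apply central_pos in H. repeat split; apply Cmod2_pos_neq_0; tauto. Qed.

Section RegionContinuity.
Context {T : UniformSpace} (h1 h2 h3 : T -> R) (x : T).
Hypotheses (H1 : continuous h1 x) (H2 : continuous h2 x) (H3 : continuous h3 x).

Ltac continuous_region :=
  repeat lazymatch goal with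
  | |- continuous (fun y => bump []) _ => apply continuous_const
  | |- continuous (fun y => bump (_ :: _)) _ => apply continuous_bump_cons
  | |- continuous (fun y => _ + _ - _) _ => apply continuous_add_const_sub; assumption
  | |- continuous (fun y => _ - _) _ => apply continuous_sub_const; assumption
  end.

Lemma continuous_dominant : continuous (fun y => bump (dominant (h1 y) (h2 y) (h3 y))) x.
Proof. unfold dominant. continuous_region. Qed.

Lemma continuous_paired : continuous (fun y => bump (paired (h1 y) (h2 y) (h3 y))) x.
Proof. unfold paired. continuous_region. Qed.

Lemma continuous_central : continuous (fun y => bump (central (h1 y) (h2 y) (h3 y))) x.
Proof. unfold central. continuous_region. Qed.
End RegionContinuity.

Definition phase_mono (k1 k2 k3 : Z) (z1 z2 z3 : CC) : CC :=
  (Cpowz (Csgn z1) k1 * Cpowz (Csgn z2) k2 * Cpowz (Csgn z3) k3)%C.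

Lemma Cmod_mult_le_1 (a b : CC) : Cmod a <= 1 -> Cmod b <= 1 -> Cmod (a * b) <= 1.
Proof. intros Ha Hb. rewrite Cmod_mult. assert (H := Cmod_ge_0 a). nra. Qed.

Lemma Cmod_phase_mono_le_1 (k1 k2 k3 : Z) (z1 z2 z3 : CC) :
  Cmod (phase_mono k1 k2 k3 z1 z2 z3) <= 1.
Proof.
  unfold phase_mono.
  repeat apply Cmod_mult_le_1; apply Cmod_Cpowz_le_1, Cmod_Csgn_le_1.
Qed.

Lemma Cmod_Cpowz_Csgn (z : CC) (k : Z) : (k = 0%Z \/ z <> 0%C) -> Cmod (Cpowz (Csgn z) k) = 1.
Proof.
  intros [-> | Hz]; [apply Cmod_1 | now apply Cmod_Cpowz, Cmod_Csgn].
Qed.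

Lemma Cmod_phase_mono (k1 k2 k3 : Z) (z1 z2 z3 : CC) :
  (k1 = 0%Z \/ z1 <> 0%C) -> (k2 = 0%Z \/ z2 <> 0%C) -> (k3 = 0%Z \/ z3 <> 0%C) ->
  Cmod (phase_mono k1 k2 k3 z1 z2 z3) = 1.
Proof.
  intros H1 H2 H3. unfold phase_mono.
  now rewrite !Cmod_mult, !Cmod_Cpowz_Csgn, !Rmult_1_l.
Qed.

Lemma continuous_phase_mono {T : UniformSpace} (k1 k2 k3 : Z) (f1 f2 f3 : T -> CC) (x : T) :
  continuous f1 x -> continuous f2 x -> continuous f3 x ->
  (k1 = 0%Z \/ f1 x <> 0%C) -> (k2 = 0%Z \/ f2 x <> 0%C) -> (k3 = 0%Z \/ f3 x <> 0%C) ->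
  continuous (fun y => phase_mono k1 k2 k3 (f1 y) (f2 y) (f3 y)) x.
Proof.
  assert (Hfactor : forall (f : T -> CC) k, continuous f x -> (k = 0%Z \/ f x <> 0%C) ->
            continuous (fun y => Cpowz (Csgn (f y)) k) x).
  { intros f k Hf [-> | Hfx]; [apply continuous_const|].
    now apply continuous_Cpowz, continuous_Csgn. }
  intros C1 C2 C3 K1 K2 K3. unfold phase_mono.
  apply continuous_Cmult; [apply continuous_Cmult|]; now apply Hfactor.
Qed.

Lemma Cconj_phase_mono (k1 k2 k3 : Z) (z1 z2 z3 : CC) :
  Cconj (phase_mono k1 k2 k3 z1 z2 z3) = phase_mono (- k1) (- k2) (- k3) z1 z2 z3.
Proof. unfold phase_mono. now rewrite !Cmult_conj, !Cpowz_opp. Qed.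

Lemma Cpow_phase_mono (k1 k2 k3 : Z) (z1 z2 z3 : CC) (n : nat) :
  Cpow (phase_mono k1 k2 k3 z1 z2 z3) n
  = phase_mono (Z.of_nat n * k1) (Z.of_nat n * k2) (Z.of_nat n * k3) z1 z2 z3.
Proof. unfold phase_mono. now rewrite !Cpow_mult_l, !Cpow_Cpowz. Qed.

Lemma phase_mono_mult (k1 k2 k3 l1 l2 l3 : Z) (z1 z2 z3 : CC) :
  z1 <> 0%C -> z2 <> 0%C -> z3 <> 0%C ->
  (phase_mono k1 k2 k3 z1 z2 z3 * phase_mono l1 l2 l3 z1 z2 z3)%C
  = phase_mono (k1 + l1) (k2 + l2) (k3 + l3) z1 z2 z3.
Proof.
  intros H1 H2 H3. unfold phase_mono.
  rewrite !Cpowz_add by now apply Cmod_Csgn. ring.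
Qed.

Lemma phase_mono_ratio (k1 k2 k3 l1 l2 l3 k1' k2' k3' l1' l2' l3' : Z) (n : nat) (z1 z2 z3 : CC) :
  z1 <> 0%C -> z2 <> 0%C -> z3 <> 0%C ->
  (k1 - l1 = Z.of_nat n * (k1' - l1'))%Z -> (k2 - l2 = Z.of_nat n * (k2' - l2'))%Z ->
  (k3 - l3 = Z.of_nat n * (k3' - l3'))%Z ->
  (phase_mono k1 k2 k3 z1 z2 z3 * Cconj (phase_mono l1 l2 l3 z1 z2 z3))%C
  = Cpow (phase_mono k1' k2' k3' z1 z2 z3 * Cconj (phase_mono l1' l2' l3' z1 z2 z3)) n.
Proof.
  intros H1 H2 H3 E1 E2 E3.
  rewrite !Cconj_phase_mono, !phase_mono_mult, Cpow_phase_mono by assumption.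
  f_equal; lia.
Qed.

Lemma Cmod2_unit_mult (c z : CC) : Cmod c = 1 -> Cmod2 (c * z) = Cmod2 z.
Proof. intros Hc. unfold Cmod2. now rewrite Cmod_unit_mult. Qed.

Lemma phase_mono_unit_mult (k1 k2 k3 : Z) (c1 c2 c3 z1 z2 z3 : CC) :
  Cmod c1 = 1 -> Cmod c2 = 1 -> Cmod c3 = 1 ->
  phase_mono k1 k2 k3 (c1 * z1) (c2 * z2) (c3 * z3)
  = (Cpowz c1 k1 * Cpowz c2 k2 * Cpowz c3 k3 * phase_mono k1 k2 k3 z1 z2 z3)%C.
Proof.
  intros H1 H2 H3. unfold phase_mono.
  rewrite !Csgn_unit_mult, !Cpowz_mult_l by assumption. ring.
Qed.

Definition W1 (p : nat) (z1 z2 z3 : CC) : CC :=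
  let r1 := Cmod2 z1 in let r2 := Cmod2 z2 in let r3 := Cmod2 z3 in
  let q := Z.of_nat p in
  (RtoC (bump (dominant r1 r2 r3)) * phase_mono (q ^ 3) 0 0 z1 z2 z3
   + RtoC (bump (dominant r2 r1 r3)) * phase_mono 0 (q ^ 2) 0 z1 z2 z3
   + RtoC (bump (dominant r3 r1 r2)) * phase_mono 0 0 q z1 z2 z3
   + Ci * (RtoC (bump (central r1 r2 r3)) * phase_mono (q ^ 2) (- q) q z1 z2 z3))%C.

Definition W2 (p : nat) (z1 z2 z3 : CC) : CC :=
  let r1 := Cmod2 z1 in let r2 := Cmod2 z2 in let r3 := Cmod2 z3 in
  let q := Z.of_nat p in
  (RtoC (bump (paired r1 r2 r3)) * phase_mono (- q) 1 0 z1 z2 z3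
   + RtoC (bump (paired r1 r3 r2)) * phase_mono (- q ^ 2) 0 1 z1 z2 z3
   + RtoC (bump (paired r2 r3 r1)) * phase_mono 0 (- q) 1 z1 z2 z3)%C.

Section Action.
Variables (p : nat) (t X : CC).
Hypotheses (Ht : Cmod t = 1) (HX : Cmod X = 1) (HXp : Cpow X p = 1).

Let q := Z.of_nat p.

Lemma Cmod_weight_scalar (w : nat) : Cmod (Cpow t w * X) = 1.
Proof. now rewrite Cmod_mult, Cmod_pow, Ht, HX, pow1, Rmult_1_l. Qed.

Lemma phase_mono_act (k1 k2 k3 : Z) (z1 z2 z3 : CC) :
  phase_mono k1 k2 k3 (Cpow t 1 * X * z1) (Cpow t p * X * z2) (Cpow t (p ^ 2) * X * z3)
  = (Cpowz t (k1 + q * k2 + q ^ 2 * k3) * Cpowz X (k1 + k2 + k3)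
     * phase_mono k1 k2 k3 z1 z2 z3)%C.
Proof.
  rewrite phase_mono_unit_mult by apply Cmod_weight_scalar.
  rewrite !Cpowz_mult_l, !Cpowz_Cpow, !Cpowz_add by assumption.
  unfold q. rewrite Nat2Z.inj_pow, Z.mul_1_l. change (Z.of_nat 2) with 2%Z.
  ring.
Qed.

Lemma phase_mono_act_W1 (k1 k2 k3 m : Z) (z1 z2 z3 : CC) :
  (k1 + q * k2 + q ^ 2 * k3 = q ^ 3)%Z -> (k1 + k2 + k3 = q * m)%Z ->
  phase_mono k1 k2 k3 (Cpow t 1 * X * z1) (Cpow t p * X * z2) (Cpow t (p ^ 2) * X * z3)
  = (Cpow t (p ^ 3) * phase_mono k1 k2 k3 z1 z2 z3)%C.
Proof.
  intros Ew Ea. rewrite phase_mono_act, Ew, Ea. unfold q.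
  replace (Z.of_nat p ^ 3)%Z with (Z.of_nat (p ^ 3)) by now rewrite Nat2Z.inj_pow.
  rewrite Cpowz_root_of_unity, Cpowz_of_nat by exact HXp. ring.
Qed.

Lemma phase_mono_act_W2 (k1 k2 k3 m : Z) (z1 z2 z3 : CC) :
  (k1 + q * k2 + q ^ 2 * k3 = 0)%Z -> (k1 + k2 + k3 = 1 + q * m)%Z ->
  phase_mono k1 k2 k3 (Cpow t 1 * X * z1) (Cpow t p * X * z2) (Cpow t (p ^ 2) * X * z3)
  = (X * phase_mono k1 k2 k3 z1 z2 z3)%C.
Proof.
  intros Ew Ea. rewrite phase_mono_act, Ew, Ea, Cpowz_add by exact HX. unfold q.
  rewrite Cpowz_root_of_unity by exact HXp. simpl. ring.
Qed.

Lemma W1_act (z1 z2 z3 : CC) :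
  W1 p (Cpow t 1 * X * z1) (Cpow t p * X * z2) (Cpow t (p ^ 2) * X * z3)
  = (Cpow t (p ^ 3) * W1 p z1 z2 z3)%C.
Proof.
  unfold W1. cbv zeta. fold q. rewrite !Cmod2_unit_mult by apply Cmod_weight_scalar.
  rewrite (phase_mono_act_W1 _ _ _ (q ^ 2)), (phase_mono_act_W1 _ _ _ q),
    (phase_mono_act_W1 _ _ _ 1), (phase_mono_act_W1 _ _ _ q) by ring.
  ring.
Qed.

Lemma W2_act (z1 z2 z3 : CC) :
  W2 p (Cpow t 1 * X * z1) (Cpow t p * X * z2) (Cpow t (p ^ 2) * X * z3)
  = (X * W2 p z1 z2 z3)%C.
Proof.
  unfold W2. cbv zeta. fold q. rewrite !Cmod2_unit_mult by apply Cmod_weight_scalar.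
  rewrite (phase_mono_act_W2 _ _ _ (-1)), (phase_mono_act_W2 _ _ _ (- q)),
    (phase_mono_act_W2 _ _ _ (-1)) by ring.
  ring.
Qed.
End Action.

Lemma continuous_phase_term {T : UniformSpace} (c : T -> R) (k1 k2 k3 : Z)
    (f1 f2 f3 : T -> CC) (x : T) :
  continuous c x -> continuous f1 x -> continuous f2 x -> continuous f3 x ->
  (c x <> 0 ->
   (k1 = 0%Z \/ f1 x <> 0%C) /\ (k2 = 0%Z \/ f2 x <> 0%C) /\ (k3 = 0%Z \/ f3 x <> 0%C)) ->
  continuous (fun y => (RtoC (c y) * phase_mono k1 k2 k3 (f1 y) (f2 y) (f3 y))%C) x.
Proof.
  intros Hc H1 H2 H3 Hreg.
  apply continuous_scale_bounded; [exact Hc | | intros; apply Cmod_phase_mono_le_1].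
  intros Hcx. destruct (Hreg Hcx) as (K1 & K2 & K3). now apply continuous_phase_mono.
Qed.

Section WContinuity.
Context {T : UniformSpace} (p : nat) (f1 f2 f3 : T -> CC) (x : T).
Hypotheses (H1 : continuous f1 x) (H2 : continuous f2 x) (H3 : continuous f3 x).

Let C1 := continuous_Cmod2 f1 x H1.
Let C2 := continuous_Cmod2 f2 x H2.
Let C3 := continuous_Cmod2 f3 x H3.

Lemma continuous_W1 : continuous (fun y => W1 p (f1 y) (f2 y) (f3 y)) x.
Proof.
  unfold W1. cbv zeta.
  apply continuous_Cplus; [apply continuous_Cplus; [apply continuous_Cplus|]|].
  - apply continuous_phase_term; [now apply continuous_dominant | assumption.. |].
    intros Hc. apply bump_neq_0, dominant_neq_0 in Hc. intuition.
  - apply continuous_phase_term; [now apply continuous_dominant | assumption.. |].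
    intros Hc. apply bump_neq_0, dominant_neq_0 in Hc. intuition.
  - apply continuous_phase_term; [now apply continuous_dominant | assumption.. |].
    intros Hc. apply bump_neq_0, dominant_neq_0 in Hc. intuition.
  - apply continuous_Cmult; [apply continuous_const|].
    apply continuous_phase_term; [now apply continuous_central | assumption.. |].
    intros Hc. apply bump_neq_0, central_neq_0 in Hc. intuition.
Qed.

Lemma continuous_W2 : continuous (fun y => W2 p (f1 y) (f2 y) (f3 y)) x.
Proof.
  unfold W2. cbv zeta.
  apply continuous_Cplus; [apply continuous_Cplus|];
    (apply continuous_phase_term; [now apply continuous_paired | assumption.. |]);
    intros Hc; apply bump_neq_0, paired_neq_0 in Hc; intuition.
Qed.
End WContinuity.

Definition exactly_one3 (P Q R : Prop) : Prop :=
  (P /\ ~ Q /\ ~ R) \/ (~ P /\ Q /\ ~ R) \/ (~ P /\ ~ Q /\ R).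

Definition exactly_one4 (P Q R S : Prop) : Prop :=
  (P /\ ~ Q /\ ~ R /\ ~ S) \/ (~ P /\ Q /\ ~ R /\ ~ S) \/
  (~ P /\ ~ Q /\ R /\ ~ S) \/ (~ P /\ ~ Q /\ ~ R /\ S).

Lemma threshold_cases (x : R) :
  (~ 0 < x - 1/10 /\ ~ 0 < x - 1/4 /\ ~ 0 < x - 7/20) \/
  (0 < x - 1/10 /\ ~ 0 < x - 1/4 /\ ~ 0 < x - 7/20) \/
  (0 < x - 1/10 /\ 0 < x - 1/4 /\ ~ 0 < x - 7/20) \/
  (0 < x - 1/10 /\ 0 < x - 1/4 /\ 0 < x - 7/20).
Proof. lra. Qed.

Lemma closeness_cases (x y : R) :
  (0 < x + 1/50 - y /\ 0 < y + 1/50 - x) \/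
  (0 < x + 1/50 - y /\ ~ 0 < y + 1/50 - x) \/
  (~ 0 < x + 1/50 - y /\ 0 < y + 1/50 - x).
Proof. lra. Qed.

(* [O], [A], [B], [Z] are the supports of the coefficients of [W1], and [a], [b],
   [c] those of [W2]. *)
Lemma simplex_cover (r1 r2 r3 : R) :
  0 <= r1 -> 0 <= r2 -> 0 <= r3 -> r1 + r2 + r3 = 1 ->
  let O := Forall (Rlt 0) (dominant r1 r2 r3) in
  let A := Forall (Rlt 0) (dominant r2 r1 r3) in
  let B := Forall (Rlt 0) (dominant r3 r1 r2) in
  let Z := Forall (Rlt 0) (central r1 r2 r3) in
  let a := Forall (Rlt 0) (paired r1 r2 r3) in
  let b := Forall (Rlt 0) (paired r1 r3 r2) in
  let c := Forall (Rlt 0) (paired r2 r3 r1) in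
  exactly_one4 O A B Z \/ exactly_one3 a b c \/
  (O /\ Z /\ ~ A /\ ~ B /\ a /\ b /\ ~ c) \/
  (A /\ Z /\ ~ O /\ ~ B /\ a /\ c /\ ~ b) \/
  (B /\ Z /\ ~ O /\ ~ A /\ b /\ c /\ ~ a).
Proof.
  intros H1 H2 H3 Hsum. cbv zeta.
  unfold exactly_one3, exactly_one4, dominant, paired, central.
  rewrite !Forall_cons_iff, !Forall_nil_iff.
  destruct (threshold_cases r1) as [T1|[T1|[T1|T1]]];
  destruct (threshold_cases r2) as [T2|[T2|[T2|T2]]];
  destruct (threshold_cases r3) as [T3|[T3|[T3|T3]]];
  destruct (closeness_cases r1 r2) as [C12|[C12|C12]];
  destruct (closeness_cases r1 r3) as [C13|[C13|C13]];
  destruct (closeness_cases r2 r3) as [C23|[C23|C23]];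
  first [ exfalso; lra | tauto ].
Qed.

Lemma Cmult_pos_unit_neq_0 (c : R) (m : CC) : 0 < c -> Cmod m = 1 -> (RtoC c * m)%C <> 0%C.
Proof.
  intros Hc Hm E. apply (f_equal Cmod) in E.
  rewrite Cmod_mult, Cmod_R, Hm, Cmod_0, Rabs_pos_eq in E; lra.
Qed.

Lemma W1_neq_0 (p : nat) (z1 z2 z3 : CC) :
  let r1 := Cmod2 z1 in let r2 := Cmod2 z2 in let r3 := Cmod2 z3 in
  exactly_one4 (Forall (Rlt 0) (dominant r1 r2 r3)) (Forall (Rlt 0) (dominant r2 r1 r3))
    (Forall (Rlt 0) (dominant r3 r1 r2)) (Forall (Rlt 0) (central r1 r2 r3)) ->
  W1 p z1 z2 z3 <> 0%C.
Proof.
  unfold W1, exactly_one4. cbv zeta.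
  intros [(HO & HA & HB & HZ) |
          [(HO & HA & HB & HZ) | [(HO & HA & HB & HZ) | (HO & HA & HB & HZ)]]].
  - rewrite (bump_eq_0 _ HA), (bump_eq_0 _ HB), (bump_eq_0 _ HZ).
    rewrite !Cmult_0_l, Cmult_0_r, !Cplus_0_r.
    apply Cmult_pos_unit_neq_0; [now apply bump_pos|].
    apply dominant_neq_0 in HO. apply Cmod_phase_mono; intuition.
  - rewrite (bump_eq_0 _ HO), (bump_eq_0 _ HB), (bump_eq_0 _ HZ).
    rewrite !Cmult_0_l, Cmult_0_r, !Cplus_0_r, Cplus_0_l.
    apply Cmult_pos_unit_neq_0; [now apply bump_pos|].
    apply dominant_neq_0 in HA. apply Cmod_phase_mono; intuition.
  - rewrite (bump_eq_0 _ HO), (bump_eq_0 _ HA), (bump_eq_0 _ HZ).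
    rewrite !Cmult_0_l, Cmult_0_r, Cplus_0_r, !Cplus_0_l.
    apply Cmult_pos_unit_neq_0; [now apply bump_pos|].
    apply dominant_neq_0 in HB. apply Cmod_phase_mono; intuition.
  - rewrite (bump_eq_0 _ HO), (bump_eq_0 _ HA), (bump_eq_0 _ HB).
    rewrite !Cmult_0_l, !Cplus_0_l.
    apply Cmult_neq_0; [apply Ci_nz|].
    apply Cmult_pos_unit_neq_0; [now apply bump_pos|].
    apply central_neq_0 in HZ. apply Cmod_phase_mono; intuition.
Qed.

Lemma W2_neq_0 (p : nat) (z1 z2 z3 : CC) :
  let r1 := Cmod2 z1 in let r2 := Cmod2 z2 in let r3 := Cmod2 z3 in
  exactly_one3 (Forall (Rlt 0) (paired r1 r2 r3)) (Forall (Rlt 0) (paired r1 r3 r2))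
    (Forall (Rlt 0) (paired r2 r3 r1)) ->
  W2 p z1 z2 z3 <> 0%C.
Proof.
  unfold W2, exactly_one3. cbv zeta.
  intros [(Ha & Hb & Hc) | [(Ha & Hb & Hc) | (Ha & Hb & Hc)]].
  - rewrite (bump_eq_0 _ Hb), (bump_eq_0 _ Hc), !Cmult_0_l, !Cplus_0_r.
    apply Cmult_pos_unit_neq_0; [now apply bump_pos|].
    apply paired_neq_0 in Ha. apply Cmod_phase_mono; intuition.
  - rewrite (bump_eq_0 _ Ha), (bump_eq_0 _ Hc), !Cmult_0_l, Cplus_0_r, Cplus_0_l.
    apply Cmult_pos_unit_neq_0; [now apply bump_pos|].
    apply paired_neq_0 in Hb. apply Cmod_phase_mono; intuition.
  - rewrite (bump_eq_0 _ Ha), (bump_eq_0 _ Hb), !Cmult_0_l, !Cplus_0_l.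
    apply Cmult_pos_unit_neq_0; [now apply bump_pos|].
    apply paired_neq_0 in Hc. apply Cmod_phase_mono; intuition.
Qed.

Lemma sum_mult_conj_unit (a P Y : CC) :
  Cmod P = 1 -> ((a * P + Y) * Cconj P)%C = (a + Y * Cconj P)%C.
Proof. intros HP. rewrite Cmult_plus_distr_r, <- Cmult_assoc, unit_mult_conj by exact HP. ring. Qed.

Lemma sum_eq_0_real_ratio (c d : R) (P S : CC) : d <> 0 -> Cmod P = 1 ->
  (RtoC c * P + RtoC d * S)%C = 0%C -> exists s : R, (S * Cconj P)%C = RtoC s.
Proof.
  intros Hd HP E. apply (f_equal (fun w => (w * Cconj P)%C)) in E.
  rewrite sum_mult_conj_unit, Cmult_0_l, <- Cmult_assoc in E by exact HP.
  destruct (S * Cconj P)%C as [u v]. exists u.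
  apply (f_equal Im) in E. simpl in E. replace v with 0 by nra. reflexivity.
Qed.

(* The phase argument: the second equation makes [S * Cconj R] real, hence also
   [Q * Cconj P]; the first one then forces [a = 0]. *)
Lemma tied_sums_not_both_zero (a b c d : R) (P Q R S : CC) (n : nat) :
  a <> 0 -> d <> 0 -> Cmod P = 1 -> Cmod R = 1 ->
  (Q * Cconj P)%C = Cpow (S * Cconj R) n ->
  (RtoC a * P + Ci * (RtoC b * Q))%C = 0%C -> (RtoC c * R + RtoC d * S)%C = 0%C -> False.
Proof.
  intros Ha Hd HP HR Htie E1 E2.
  destruct (sum_eq_0_real_ratio c d R S Hd HR E2) as [s Hs].
  rewrite Hs, <- RtoC_pow in Htie.
  apply (f_equal (fun w => (w * Cconj P)%C)) in E1.
  rewrite sum_mult_conj_unit, Cmult_0_l, <- !Cmult_assoc, Htie in E1 by exact HP.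
  apply (f_equal Re) in E1. simpl in E1. lra.
Qed.

Lemma W_overlaps_not_both_zero (p : nat) (z1 z2 z3 : CC) :
  let r1 := Cmod2 z1 in let r2 := Cmod2 z2 in let r3 := Cmod2 z3 in
  let O := Forall (Rlt 0) (dominant r1 r2 r3) in
  let A := Forall (Rlt 0) (dominant r2 r1 r3) in
  let B := Forall (Rlt 0) (dominant r3 r1 r2) in
  let Z := Forall (Rlt 0) (central r1 r2 r3) in
  let a := Forall (Rlt 0) (paired r1 r2 r3) in
  let b := Forall (Rlt 0) (paired r1 r3 r2) in
  let c := Forall (Rlt 0) (paired r2 r3 r1) in
  (O /\ Z /\ ~ A /\ ~ B /\ a /\ b /\ ~ c) \/
  (A /\ Z /\ ~ O /\ ~ B /\ a /\ c /\ ~ b) \/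
  (B /\ Z /\ ~ O /\ ~ A /\ b /\ c /\ ~ a) ->
  W1 p z1 z2 z3 = 0%C -> W2 p z1 z2 z3 = 0%C -> False.
Proof.
  unfold W1, W2. cbv zeta.
  intros [(HO & HZ & HA & HB & Ha & Hb & Hc) |
          [(HA & HZ & HO & HB & Ha & Hc & Hb) | (HB & HZ & HO & HA & Hb & Hc & Ha)]] E1 E2;
    destruct (central_neq_0 _ _ _ HZ) as (N1 & N2 & N3).
  - rewrite (bump_eq_0 _ HA), (bump_eq_0 _ HB), !Cmult_0_l, !Cplus_0_r in E1.
    rewrite (bump_eq_0 _ Hc), Cmult_0_l, Cplus_0_r in E2.
    refine (tied_sums_not_both_zero _ _ _ _ _ _ _ _ p _ _ _ _ _ E1 E2);
      try (apply Rgt_not_eq, bump_pos; assumption);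
      try (apply Cmod_phase_mono; intuition).
    apply phase_mono_ratio; trivial; ring.
  - rewrite (bump_eq_0 _ HO), (bump_eq_0 _ HB), !Cmult_0_l, Cplus_0_r, Cplus_0_l in E1.
    rewrite (bump_eq_0 _ Hb), Cmult_0_l, Cplus_0_r in E2.
    refine (tied_sums_not_both_zero _ _ _ _ _ _ _ _ p _ _ _ _ _ E1 E2);
      try (apply Rgt_not_eq, bump_pos; assumption);
      try (apply Cmod_phase_mono; intuition).
    apply phase_mono_ratio; trivial; ring.
  - rewrite (bump_eq_0 _ HO), (bump_eq_0 _ HA), !Cmult_0_l, !Cplus_0_l in E1.
    rewrite (bump_eq_0 _ Ha), Cmult_0_l, Cplus_0_l in E2.
    refine (tied_sums_not_both_zero _ _ _ _ _ _ _ _ 1 _ _ _ _ _ E1 E2);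
      try (apply Rgt_not_eq, bump_pos; assumption);
      try (apply Cmod_phase_mono; intuition).
    apply phase_mono_ratio; trivial; ring.
Qed.

Definition Wmap (p : nat) (v : V3) : W3 :=
  let '(z1, z2, z3) := v in (W1 p z1 z2 z3, W2 p z1 z2 z3).

Definition f3 (p : nat) (v : V3) : W3 := radial (Wmap p v).

Lemma Wmap_neq_0 (p : nat) (v : V3) : SV3 v -> Wmap p v <> (RtoC 0, RtoC 0).
Proof.
  destruct v as [[z1 z2] z3]. unfold SV3, Wmap. intros Hsum E.
  assert (E1 := f_equal fst E). assert (E2 := f_equal snd E). simpl in E1, E2.
  assert (Hcover := simplex_cover (Cmod2 z1) (Cmod2 z2) (Cmod2 z3)
                      (pow2_ge_0 _) (pow2_ge_0 _) (pow2_ge_0 _) Hsum).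
  cbv zeta in Hcover. destruct Hcover as [Hone | [Hone | Hoverlap]].
  - exact (W1_neq_0 p z1 z2 z3 Hone E1).
  - exact (W2_neq_0 p z1 z2 z3 Hone E2).
  - exact (W_overlaps_not_both_zero p z1 z2 z3 Hoverlap E1 E2).
Qed.

Lemma continuous_Wmap (p : nat) (v : V3) : continuous (Wmap p) v.
Proof.
  destruct v as [[z1 z2] z3].
  apply continuous_ext with
    (f := fun y : V3 => (W1 p (fst (fst y)) (snd (fst y)) (snd y),
                         W2 p (fst (fst y)) (snd (fst y)) (snd y))).
  { now intros [[y1 y2] y3]. }
  assert (P1 : continuous (fun y : V3 => fst (fst y)) (z1, z2, z3)).
  { apply (continuous_comp fst fst); [apply continuous_fst | apply continuous_fst]. }
  assert (P2 : continuous (fun y : V3 => snd (fst y)) (z1, z2, z3)).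
  { apply (continuous_comp fst snd); [apply continuous_fst | apply continuous_snd]. }
  assert (P3 : continuous (fun y : V3 => snd y) (z1, z2, z3)) by apply continuous_snd.
  apply continuous_pair; [now apply continuous_W1 | now apply continuous_W2].
Qed.

Lemma pow_n_Cpow (x : CC) (n : nat) : pow_n x n = Cpow x n.
Proof. induction n as [|n IH]; simpl; [reflexivity|]. now rewrite IH. Qed.

Lemma actV_Cpow (p k l : nat) (t : CC) (i : nat) (z : CC) :
  actV p k l t i z = (Cpow t k * Cpow (xi p) (l * i) * z)%C.
Proof. unfold actV. now rewrite (pow_n_Cpow t k), (pow_n_Cpow (xi p) (l * i)). Qed.

Lemma Cpow_cis (a : R) (n : nat) : Cpow (cos a, sin a) n = (cos (INR n * a), sin (INR n * a)).
Proof.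
  induction n as [|n IH].
  - simpl. now rewrite Rmult_0_l, cos_0, sin_0.
  - rewrite Cpow_S, IH, S_INR, Rmult_plus_distr_r, Rmult_1_l, Rplus_comm, cos_plus, sin_plus.
    unfold Cmult; simpl. f_equal; ring.
Qed.

Lemma Cmod_xi (p : nat) : Cmod (xi p) = 1.
Proof.
  unfold xi, Cmod; simpl. rewrite !Rmult_1_r.
  set (a := 2 * PI / INR p).
  replace (cos a * cos a + sin a * sin a) with 1 by (rewrite <- (sin2_cos2 a); unfold Rsqr; ring).
  apply sqrt_1.
Qed.

Lemma Cpow_xi_self (p : nat) : Cpow (xi p) p = 1.
Proof.
  destruct (Nat.eq_dec p 0) as [-> | Hp]; [reflexivity|].
  unfold xi. rewrite Cpow_cis.
  replace (INR p * (2 * PI / INR p)) with (2 * PI) by (field; now apply not_0_INR).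
  now rewrite cos_2PI, sin_2PI.
Qed.

Lemma Cmod_action_factor (p k j : nat) (t : CC) : in_S1 t ->
  Cmod (Cmult (pow_n t k) (pow_n (xi p) j)) = 1.
Proof.
  unfold in_S1. intros Ht.
  now rewrite !pow_n_Cpow, Cmod_mult, !Cmod_pow, Ht, Cmod_xi, !pow1, Rmult_1_l.
Qed.

Lemma Wmap_equivariant (p : nat) (t : CC) (i : nat) (v : V3) : in_S1 t ->
  Wmap p (actV3 p t i v) = actW3 p t i (Wmap p v).
Proof.
  intros Ht. destruct v as [[z1 z2] z3].
  assert (HX : Cmod (Cpow (xi p) (1 * i)) = 1) by now rewrite Cmod_pow, Cmod_xi, pow1.
  assert (HXp : Cpow (Cpow (xi p) (1 * i)) p = 1).
  { now rewrite <- Cpow_mult_r, Nat.mul_comm, Cpow_mult_r, Cpow_xi_self, Cpow_1_l. }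
  unfold Wmap, actV3, actW3. cbv beta iota. rewrite !actV_Cpow.
  rewrite W1_act, W2_act by assumption. simpl. f_equal; ring.
Qed.

Lemma f3_equivariant (p : nat) (t : CC) (i : nat) (v : V3) : in_S1 t ->
  f3 p (actV3 p t i v) = actW3 p t i (f3 p v).
Proof.
  intros Ht. unfold f3. rewrite Wmap_equivariant by exact Ht.
  destruct (Wmap p v) as [w1 w2]. unfold actW3 at 1, actV.
  now rewrite radial_unit_mult by now apply Cmod_action_factor.
Qed.

Theorem proposition2p2 (p : nat) (hp : Znumtheory.prime (Z.of_nat p)) :
  exists f : V3 -> W3,
    (forall v, SV3 v -> SW3 (f v)) /\
    (forall v, SV3 v -> filterlim f (within SV3 (locally v)) (locally (f v))) /\
    (forall (t : CC) (i : nat) (v : V3), in_S1 t -> SV3 v ->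
       f (actV3 p t i v) = actW3 p t i (f v)).
Proof.
  exists (f3 p). split; [|split].
  - intros v Hv. now apply SW3_radial, Wmap_neq_0.
  - intros v Hv. eapply filterlim_filter_le_1; [apply filter_le_within|].
    apply (continuous_comp (Wmap p) radial);
      [apply continuous_Wmap | now apply continuous_radial, Wmap_neq_0].
  - intros t i v Ht _. now apply f3_equivariant.
Qed.
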